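(* Let $N\ge 2$ and let $A_1,\dots,A_N$ be distinct Boolean variables. Then $$A_1\wedge A_2\wedge\dots\wedge A_{N-1}\wedge A_N=(A_1<1)<((A_2<1)<\cdots((A_{N-1}<1)<A_N)\cdots)$$ as Boolean functions, and this right-hand side, which contains exactly $N-1$ occurrences of the constant $1$ and exactly one occurrence of each variable $A_i$, is a minimal $(<,1)$-representation of $A_1\wedge\dots\wedge A_N$, i.e. no $(<,1)$-expression representing $A_1\wedge\dots\wedge A_N$ uses fewer occurrences of the operation $<$.
   Context: The binary Boolean operation $<$ (Strict Boolean Inequality) is defined by $A<B=(\neg A)\wedge B$, i.e. $A<B=1$ iff $A=0$ and $B=1$. A $(<,1)$-representation (or $(<,1)$-expression) of a Boolean function of variables $A_1,\dots,A_N$ is a formula built from the variables $A_1,\dots,A_N$ and the constant $1$ using only the binary operation $<$, which computes that function; its cost is the number of occurrences of $<$ (number of gates), and a representation is minimal if no representation of the same function has smaller cost. *)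

From mathcomp Require Import all_boot.
Set Implicit Arguments. Unset Strict Implicit. Unset Printing Implicit Defensive.

(* (<,1)-expressions over the variables A_1..A_N, indexed by 'I_N
   (variable A_{i+1} is Var i). *)
Inductive form (N : nat) : Type :=
| Var of 'I_N
| One
| Lt of form N & form N.
Arguments One {N}.

Definition sbi (a b : bool) : bool := ~~ a && b.

Fixpoint eval N (v : 'I_N -> bool) (f : form N) : bool :=
  match f with
  | Var i => v i
  | One => true
  | Lt f g => sbi (eval v f) (eval v g)
  end.

Fixpoint cost N (f : form N) : nat :=
  match f with
  | Var _ => 0
  | One => 0
  | Lt f g => (cost f + cost g).+1
  end.

Fixpoint count_one N (f : form N) : nat :=
  match f with
  | Var _ => 0
  | One => 1
  | Lt f g => count_one f + count_one g
  end.

Fixpoint count_var N (i : 'I_N) (f : form N) : nat :=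
  match f with
  | Var j => (j == i)
  | One => 0
  | Lt f g => count_var i f + count_var i g
  end.

(* variable with nat index i (A_{i+1}); only used with i < N *)
Definition V N (i : nat) : form N :=
  match @insub _ (fun k => k < N) _ i with Some j => Var j | None => One end.

Fixpoint chainF N (i k : nat) : form N :=
  match k with
  | 0 => V N i
  | k'.+1 => Lt (Lt (V N i) One) (chainF N i.+1 k')
  end.

Definition rhs N : form N := chainF N 0 N.-1.

From mathcomp Require Import all_boot.
From mathcomp Require Import zify.

Set Implicit Arguments. Unset Strict Implicit. Unset Printing Implicit Defensive.

(* Minimality is a sensitivity count at the all-true assignment.  Call [x]
   sensitive for [f] when flipping only [x] to false changes the value of [f].
   By induction on [f], twice the number of sensitive variables, plus one if
   [f] is false at the all-true point, is at most [cost f + 2].  The conjunction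
   of [N] variables is true there and sensitive to every variable, so it costs
   at least [2N - 2], which is exactly the cost of the chain. *)

Lemma V_Ordinal N j (ltjN : j < N) : V N j = Var (Ordinal ltjN).
Proof.
rewrite /V; case: insubP => [u _ Hu|]; last by rewrite ltjN.
by congr Var; apply: val_inj.
Qed.

Lemma cost_V N j : cost (V N j) = 0.
Proof. by rewrite /V; case: insub. Qed.

Lemma eval_chainF N (v : 'I_N -> bool) i k :
  eval v (chainF N i k) = \big[andb/true]_(i <= j < i + k.+1) eval v (V N j).
Proof.
elim: k i => [|k IHk] i /=; first by rewrite addn1 big_nat1.
rewrite IHk big_add1 [in RHS]addnS [RHS]big_nat_recl ?leq_addr //.
by rewrite /sbi /= andbT negbK.
Qed.

Lemma count_one_chainF N i k : i + k < N -> count_one (chainF N i k) = k.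
Proof.
elim: k i => [|k IHk] i /= ltikN; first by rewrite addn0 in ltikN; rewrite (V_Ordinal ltikN).
have ltiN : i < N by lia.
rewrite (V_Ordinal ltiN) IHk /=; lia.
Qed.

Lemma count_var_chainF N (x : 'I_N) i k : i + k < N ->
  count_var x (chainF N i k) = (i <= x <= i + k).
Proof.
elim: k i => [|k IHk] i /= ltikN.
  rewrite addn0 in ltikN; rewrite (V_Ordinal ltikN) /= addn0 -eqn_leq.
  by rewrite -(inj_eq val_inj) /= eq_sym.
have ltiN : i < N by lia.
rewrite (V_Ordinal ltiN) IHk /=; last lia.
rewrite -(inj_eq val_inj) /=.
case: (ltngtP i x) => [ltix|//|<-]; first by rewrite addSnnS.
by rewrite leq_addr.
Qed.

Lemma cost_chainF N i k : cost (chainF N i k) = k.*2.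
Proof. by elim: k i => [|k IHk] i /=; rewrite ?cost_V ?IHk //; lia. Qed.

Section Sensitivity.

Variable N : nat.

Definition ones : 'I_N -> bool := fun _ => true.

Definition ones_but (x : 'I_N) : 'I_N -> bool := fun j => j != x.

Definition sensitive (f : form N) : {set 'I_N} :=
  [set x | eval (ones_but x) f != eval ones f].

Lemma sensitive_Lt (g h : form N) :
  sensitive (Lt g h) \subset
    if eval ones g then sensitive g
    else if eval ones h then sensitive g :|: sensitive h else sensitive h.
Proof.
apply/subsetP=> x; rewrite inE /= /sbi.
by case Eg: (eval ones g); case Eh: (eval ones h); rewrite !inE ?Eg ?Eh;
   case: (eval (ones_but x) g); case: (eval (ones_but x) h).
Qed.

Lemma sensitive_cost (f : form N) :
  (#|sensitive f|).*2 + ~~ eval ones f <= cost f + 2.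
Proof.
elim: f => [i||g IHg h IHh] /=.
- suff -> : sensitive (Var i) = [set i] by rewrite cards1.
  by apply/setP=> x; rewrite !inE /ones_but /ones /= (eq_sym i x); case: (x == i).
- suff -> : sensitive One = set0 by rewrite cards0.
  by apply/setP=> x; rewrite !inE.
- have := subset_leq_card (sensitive_Lt g h); rewrite /sbi.
  have := cardsU (sensitive g) (sensitive h).
  by case: (eval ones g) IHg; case: (eval ones h) IHh => /= IHh IHg; lia.
Qed.

Lemma cost_and_ge (f : form N) :
  (forall v, eval v f = \big[andb/true]_(i < N) v i) -> N.*2 <= cost f + 2.
Proof.
move=> f_and; have := sensitive_cost f.
have f_ones : eval ones f by rewrite f_and big1.
suff -> : sensitive f = setT by rewrite f_ones cardsT card_ord addn0.
by apply/setP=> x; rewrite !inE f_and f_ones (bigD1 x) //= /ones_but eqxx.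
Qed.

End Sensitivity.

Theorem mainTheorem4 (N : nat) (hN : 2 <= N) :
  (forall v : 'I_N -> bool, eval v (rhs N) = \big[andb/true]_(i < N) v i) /\
  count_one (rhs N) = N.-1 /\
  (forall i : 'I_N, count_var i (rhs N) = 1) /\
  (forall f : form N,
     (forall v : 'I_N -> bool, eval v f = \big[andb/true]_(i < N) v i) ->
     cost (rhs N) <= cost f).
Proof.
have ltN : 0 + N.-1 < N by lia.
split; [|split; [|split]].
- move=> v; rewrite /rhs eval_chainF add0n prednK; last lia.
  rewrite big_mkord; apply: eq_bigr => i _.
  by rewrite (V_Ordinal (ltn_ord i)); congr (v _); apply: val_inj.
- by rewrite /rhs count_one_chainF.
- move=> i; rewrite /rhs count_var_chainF //= add0n.
  have := ltn_ord i; lia.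
- move=> f /cost_and_ge; rewrite /rhs cost_chainF; lia.
Qed.
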